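(* Let $a\in[0,\infty)$ and let $t:[0,1]\to[0,\infty]$ and $s:[0,\infty]\to[0,1]$ be continuous and increasing functions such that $G_{t,s}(x,y)=s(t(x)+t(y))$ defines a grouping function $G_{t,s}:[0,1]^2\to[0,1]$. Suppose $t(x)=\frac{a}{2}$ if and only if $x=0$. Then the following are equivalent: (1) $G_{t,s}$ is a t-conorm; (2) $0$ is a neutral element of $G_{t,s}$; (3) $s(t(x)+\frac{a}{2})=x$ for all $x\in[0,1]$.
   Context: ''Increasing'' means non-decreasing. Arithmetic in $[0,\infty]$ uses $c+\infty=\infty$; continuity on $[0,\infty]$ refers to the usual topology of the extended half-line. A grouping function is a map $G:[0,1]^2\to[0,1]$ that is (G1) commutative, (G2) $G(x,y)=0$ iff $x=y=0$, (G3) $G(x,y)=1$ iff $x=1$ or $y=1$, (G4) increasing in each variable, (G5) continuous. A t-conorm is a commutative, associative map $S:[0,1]^2\to[0,1]$, increasing in each variable, with $S(x,0)=x$ for all $x$. *)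

From HB Require Import structures.
From mathcomp Require Import all_boot all_order all_algebra.
From mathcomp Require Import all_classical all_reals all_analysis.
Set Implicit Arguments. Unset Strict Implicit. Unset Printing Implicit Defensive.
Import Order.TTheory GRing.Theory Num.Theory.
Local Open Scope ring_scope.
Import numFieldNormedType.Exports.
Local Open Scope classical_set_scope.

Section Defs.
Variable R : realType.

Definition I01 : set R := [set x | 0 <= x <= 1].

Definition Ipos : set (\bar R) := [set x | (0 <= x)%E].

Definition grouping (G : R -> R -> R) : Prop :=
  (forall x y, I01 x -> I01 y -> I01 (G x y)) /\
  (forall x y, I01 x -> I01 y -> G x y = G y x) /\
  (forall x y, I01 x -> I01 y -> (G x y = 0 <-> (x = 0 /\ y = 0))) /\
  (forall x y, I01 x -> I01 y -> (G x y = 1 <-> (x = 1 \/ y = 1))) /\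
  (forall x y z, I01 x -> I01 y -> I01 z -> y <= z ->
      G x y <= G x z /\ G y x <= G z x) /\
  {within [set p : R * R | I01 p.1 /\ I01 p.2],
     continuous (fun p : R * R => G p.1 p.2)}.

Definition tconorm (S : R -> R -> R) : Prop :=
  (forall x y, I01 x -> I01 y -> I01 (S x y)) /\
  (forall x y, I01 x -> I01 y -> S x y = S y x) /\
  (forall x y z, I01 x -> I01 y -> I01 z -> S x (S y z) = S (S x y) z) /\
  (forall x y z, I01 x -> I01 y -> I01 z -> y <= z ->
      S x y <= S x z /\ S y x <= S z x) /\
  (forall x, I01 x -> S x 0 = x).

Definition neutral_elt (G : R -> R -> R) (e : R) : Prop :=
  forall x, I01 x -> G x e = x /\ G e x = x.

Definition Gts (t : R -> \bar R) (s : \bar R -> R) : R -> R -> R :=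
  fun x y => s (t x + t y)%E.

End Defs.
Arguments I01 {R}.
Arguments Ipos {R}.

From HB Require Import structures.
From mathcomp Require Import all_boot all_order all_algebra.
From mathcomp Require Import all_classical all_reals all_analysis.
Set Implicit Arguments.
Unset Strict Implicit.
Unset Printing Implicit Defensive.
Import Order.TTheory GRing.Theory Num.Theory.
Local Open Scope ring_scope.
Import numFieldNormedType.Exports.
Local Open Scope classical_set_scope.

(* If 0 is neutral, then s (t x + t 0) = x on [0,1]. Continuity of t and
   monotonicity of s turn this left inverse into a right inverse wherever s
   stays below 1: t (s u) + t 0 = u for u >= 2 t 0. Consequently
   G x (G y z) = s (t x + t y + t z - t 0) (both sides being 1 when G y z = 1),
   an expression symmetric in x, y, z, which yields associativity. *)

Lemma near_right_witness (R : realType) (w b : R) (P : R -> Prop) :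
  (\forall x \near w, P x) -> w < b -> exists2 x, w < x <= b & P x.
Proof.
move=> Pw wb.
have [x [Px wx xb]] : exists x, [/\ P x, w < x & x < b].
  apply: (@filter_ex _ w^'+); near=> x; split.
  - by near: x; exact: cvg_within.
  - by near: x; exact: nbhs_right_gt.
  - by near: x; exact: nbhs_right_lt.
by exists x => //; rewrite wx ltW.
Unshelve. all: by end_near.
Qed.

Lemma near_left_witness (R : realType) (w b : R) (P : R -> Prop) :
  (\forall x \near w, P x) -> b < w -> exists2 x, b <= x < w & P x.
Proof.
move=> Pw bw.
have [x [Px bx xw]] : exists x, [/\ P x, b < x & x < w].
  apply: (@filter_ex _ w^'-); near=> x; split.
  - by near: x; exact: cvg_within.
  - by near: x; exact: nbhs_left_gt.
  - by near: x; exact: nbhs_left_lt.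
by exists x => //; rewrite xw ltW.
Unshelve. all: by end_near.
Qed.

Lemma within_continuous_open (T S : topologicalType) (A : set T) (f : T -> S)
    (w : T) (O : set S) :
  {within A, continuous f} -> A w -> open O -> O (f w) ->
  \forall x \near w, A x -> O (f x).
Proof.
move=> /subspace_continuousP fcont Aw oO Ofw.
by apply: (fcont w Aw O); apply: open_nbhs_nbhs.
Qed.

Lemma I01_0 {R : realType} : I01 (0 : R).
Proof. by rewrite /I01 /= lexx ler01. Qed.

Lemma I01_1 {R : realType} : I01 (1 : R).
Proof. by rewrite /I01 /= lexx ler01. Qed.

Lemma GtsC (R : realType) (t : R -> \bar R) (s : \bar R -> R) x y :
  Gts t s x y = Gts t s y x.
Proof. by rewrite /Gts addeC. Qed.

Lemma Gts_neutral0E (R : realType) (t : R -> \bar R) (s : \bar R -> R) :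
  neutral_elt (Gts t s) 0 <-> forall x, I01 x -> s (t x + t 0%R)%E = x.
Proof.
split=> [N x Ix | tK x Ix]; first by have [] := N x Ix.
by rewrite [Gts _ _ 0 _]GtsC; split; exact: tK.
Qed.

Lemma tconorm_neutral0 (R : realType) (S : R -> R -> R) :
  tconorm S -> neutral_elt S 0.
Proof.
move=> [_ [comm [_ [_ S0]]]] x Ix; split; first exact: S0.
by rewrite comm //; [exact: S0 | exact: I01_0].
Qed.

Section NeutralZero.
Variables (R : realType) (t : R -> \bar R) (s : \bar R -> R).
Hypothesis t_ge0 : forall x, I01 x -> Ipos (t x).
Hypothesis t_cont : {within I01, continuous t}.
Hypothesis t_mono : forall x y, I01 x -> I01 y -> x <= y -> (t x <= t y)%E.
Hypothesis s_I01 : forall u, Ipos u -> I01 (s u).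
Hypothesis s_mono : forall u v, Ipos u -> Ipos v -> (u <= v)%E -> s u <= s v.
Hypothesis t0_fin : t 0 \is a fin_num.
Hypothesis s_tK : forall x, I01 x -> s (t x + t 0%R)%E = x.

Lemma t0_le x : I01 x -> (t 0%R <= t x)%E.
Proof. by move=> /[dup] Ix /andP[x0 _]; apply: t_mono => //; exact: I01_0. Qed.

Lemma Ipos_tD u : Ipos u -> forall x, I01 x -> Ipos (t x + u)%E.
Proof. by move=> u0 x Ix; apply: adde_ge0 => //; exact: t_ge0. Qed.

Lemma t_s_add_t0_ge u : Ipos u -> s u < 1 -> (u <= t (s u) + t 0%R)%E.
Proof.
move=> u0 su1; have Isu := s_I01 u0; have /andP[su0 _] := Isu.
rewrite leNgt; apply/negP => lt_u.
have O : `]-oo, (u - t 0%R)%E[%classic (t (s u)).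
  by rewrite /= in_itv /= lteBrDr.
have [x /andP[sux x1] Px] := near_right_witness
  (within_continuous_open t_cont Isu (@lray_open _ _ _) O) su1.
have Ix : I01 x by rewrite /I01 /= x1 andbT (le_trans su0) // ltW.
have lt_x : (t x + t 0%R < u)%E by move: (Px Ix); rewrite /= in_itv /= lteBrDr.
have : x <= s u.
  by rewrite -[x in x <= _](s_tK Ix); apply: s_mono (ltW lt_x) => //;
    exact: (Ipos_tD (t_ge0 I01_0) Ix).
by rewrite leNgt sux.
Qed.

Lemma t_s_add_t0_le u :
  Ipos u -> (t 0%R + t 0%R <= u)%E -> (t (s u) + t 0%R <= u)%E.
Proof.
move=> u0 t00u; have Isu := s_I01 u0; have /andP[su0 su1] := Isu.
rewrite leNgt; apply/negP => lt_u.
have su_gt0 : 0 < s u.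
  rewrite lt_neqAle su0 andbT eq_sym; apply/eqP => su_eq0.
  by move: lt_u; rewrite su_eq0 ltNge t00u.
have O : `](u - t 0%R)%E, +oo[%classic (t (s u)).
  by rewrite /= in_itv /= andbT lteBlDr.
have [x /andP[x0 xsu] Px] := near_left_witness
  (within_continuous_open t_cont Isu (@rray_open _ _ _) O) su_gt0.
have Ix : I01 x by rewrite /I01 /= x0 (le_trans _ su1) // ltW.
have gt_x : (u < t x + t 0%R)%E.
  by move: (Px Ix); rewrite /= in_itv /= andbT lteBlDr.
have : s u <= x.
  by rewrite -[x in _ <= x](s_tK Ix); apply: s_mono (ltW gt_x) => //;
    exact: (Ipos_tD (t_ge0 I01_0) Ix).
by rewrite leNgt xsu.
Qed.

Lemma t_s_add_t0 u :
  Ipos u -> (t 0%R + t 0%R <= u)%E -> s u < 1 -> (t (s u) + t 0%R = u)%E.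
Proof.
move=> u0 t00u su1; apply/eqP; rewrite eq_le.
by rewrite t_s_add_t0_le ?t_s_add_t0_ge.
Qed.

Lemma Gtsx1 x : I01 x -> Gts t s x 1 = 1.
Proof.
move=> Ix; have t1_ge0 := t_ge0 I01_1.
have /andP[_ s_le1] := s_I01 (Ipos_tD t1_ge0 Ix).
apply/eqP; rewrite eq_le s_le1 /= -[leLHS](s_tK I01_1) /Gts.
apply: s_mono; first exact: (Ipos_tD (t_ge0 I01_0) I01_1).
  exact: (Ipos_tD t1_ge0 Ix).
by rewrite addeC; apply: leeD (lexx _); exact: t0_le.
Qed.

Lemma Gts_Gts x y z : I01 x -> I01 y -> I01 z ->
  Gts t s x (Gts t s y z) = s (t x + t y + t z - t 0%R)%E.
Proof.
move=> Ix Iy Iz; rewrite /Gts; set u := (t y + t z)%E.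
have u0 : Ipos u by exact: (Ipos_tD (t_ge0 Iz) Iy).
have t00u : (t 0%R + t 0%R <= u)%E by apply: leeD; exact: t0_le.
have /andP[_] := s_I01 u0; rewrite le_eqVlt => /orP[/eqP su1 | su1].
  have u_le : (u <= t x + t y + t z - t 0%R)%E.
    rewrite -(addeA (t x)) leeBrDr // [leRHS]addeC.
    exact: (leeD (lexx u) (t0_le Ix)).
  have v0 : Ipos (t x + t y + t z - t 0%R)%E := le_trans u0 u_le.
  have /andP[_ s_le1] := s_I01 v0.
  rewrite su1 [s _](Gtsx1 Ix); apply/eqP; rewrite eq_le s_le1 -su1.
  by rewrite andbT; exact: s_mono.
have t_su : t (s u) = (u - t 0%R)%E.
  by rewrite -[in RHS](t_s_add_t0 u0 t00u su1) addeK.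
by rewrite t_su /u !addeA.
Qed.

Lemma Gts_I01 x y : I01 x -> I01 y -> I01 (Gts t s x y).
Proof. by move=> Ix Iy; apply: s_I01; exact: (Ipos_tD (t_ge0 Iy) Ix). Qed.

Lemma Gts_monor x y z : I01 x -> I01 y -> I01 z -> y <= z ->
  Gts t s x y <= Gts t s x z.
Proof.
move=> Ix Iy Iz yz; apply: s_mono; first exact: (Ipos_tD (t_ge0 Iy) Ix).
  exact: (Ipos_tD (t_ge0 Iz) Ix).
exact: (leeD (lexx _) (t_mono Iy Iz yz)).
Qed.

Lemma GtsA x y z : I01 x -> I01 y -> I01 z ->
  Gts t s x (Gts t s y z) = Gts t s (Gts t s x y) z.
Proof.
move=> Ix Iy Iz; rewrite [RHS]GtsC !Gts_Gts ?Gts_I01 //.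
by rewrite [in LHS](addeC (_ + t y)) addeA.
Qed.

Lemma Gts_tconorm : tconorm (Gts t s).
Proof.
split; first exact: Gts_I01.
split; first by move=> x y _ _; exact: GtsC.
split; first exact: GtsA.
split; last exact: s_tK.
move=> x y z Ix Iy Iz yz; rewrite ![Gts _ _ _ x]GtsC.
by split; exact: Gts_monor.
Qed.

End NeutralZero.

Theorem theorem6p3 (R : realType) (a : R) (t : R -> \bar R) (s : \bar R -> R) :
  0 <= a ->
  (forall x, I01 x -> Ipos (t x)) ->
  {within I01, continuous t} ->
  (forall x y, I01 x -> I01 y -> x <= y -> (t x <= t y)%E) ->
  (forall u, Ipos u -> I01 (s u)) ->
  {within Ipos, continuous s} ->
  (forall u v, Ipos u -> Ipos v -> (u <= v)%E -> s u <= s v) ->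
  grouping (Gts t s) ->
  (forall x, I01 x -> (t x = (a / 2)%:E <-> x = 0)) ->
  (tconorm (Gts t s) <-> neutral_elt (Gts t s) 0) /\
  (neutral_elt (Gts t s) 0 <->
     (forall x, I01 x -> s (t x + (a / 2)%:E)%E = x)).
Proof.
move=> _ t_ge0 t_cont t_mono s_I01 _ s_mono _ t0_iff.
have t0 : t 0 = (a / 2)%:E by apply/(t0_iff 0 I01_0).
have t0_fin : t 0 \is a fin_num by rewrite t0.
rewrite -t0; split; last exact: Gts_neutral0E.
split; first exact: tconorm_neutral0.
by move=> /Gts_neutral0E s_tK; apply: Gts_tconorm.
Qed.
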